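(* Let $\mathbb{K}$ be a topological field, $d\in\mathbb{N}$, $F$ a topological $\mathbb{K}$-vector space, $U\subseteq\mathbb{K}^d$ open or of the form $U_1\times\cdots\times U_d$ with $U_i\subseteq\mathbb{K}$ having dense interior, $f\colon U\to F$, and $k\in\mathbb{N}_0$. Let $e_1,\ldots,e_d$ denote the standard unit multi-indices. (a) If $f$ is $C^1_{SDS}$ and $f^{<e_i>}$ is $C^k_{SDS}$ for each $i\in\{1,\ldots,d\}$, then $f$ is $C^{k+1}_{SDS}$. (b) Let $\mathbb{K}$ be a valued field and $\sigma>0$. If $f$ is $C^{1,\sigma}_{SDS}$ and $f^{<e_i>}$ is $C^{k,\sigma}_{SDS}$ for each $i\in\{1,\ldots,d\}$, then $f$ is $C^{k+1,\sigma}_{SDS}$.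
   Context: Topological fields are Hausdorff and non-discrete, vector spaces Hausdorff; a valued field is a field with absolute value defining a non-discrete topology. For $\alpha\in\mathbb{N}_0^d$, $|\alpha|=\sum\alpha_i$; write $x\in\mathbb{K}^{d+|\alpha|}$ as $(x^{(1)},\ldots,x^{(d)})$, $x^{(i)}=(x^{(i)}_0,\ldots,x^{(i)}_{\alpha_i})$. $U^{<\alpha>}$: all $x$ with $(x^{(1)}_{i_1},\ldots,x^{(d)}_{i_d})\in U$ for all $0\le i_\ell\le\alpha_\ell$; $U^{>\alpha<}$: those with $x^{(i)}_j\neq x^{(i)}_k$ for $j\neq k$. $f^{>0<}=f$, and for $|\alpha|\ge1$, $f^{>\alpha<}(x)=\sum_{j_1=0}^{\alpha_1}\cdots\sum_{j_d=0}^{\alpha_d}\big(\prod_{\ell=1}^d\prod_{k_\ell\neq j_\ell}(x^{(\ell)}_{j_\ell}-x^{(\ell)}_{k_\ell})^{-1}\big)f(x^{(1)}_{j_1},\ldots,x^{(d)}_{j_d})$ on $U^{>\alpha<}$. $f$ is $C^0_{SDS}$ if continuous ($f^{<0>}:=f$); $C^k_{SDS}$ if $C^{k-1}_{SDS}$ and for all $|\alpha|=k$, $f^{>\alpha<}$ has a continuous extension $f^{<\alpha>}$ to $U^{<\alpha>}$. The same definitions apply to maps on $U^{<e_i>}\subseteq\mathbb{K}^{d+1}$ (which is open, resp. a product of sets with dense interior). Gauge on a topological vector space $E$ over a valued field: $q\colon E\to[0,\infty[$, $q(tx)=|t|q(x)$, all balls $\{q<r\}$ are $0$-neighbourhoods.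 A map $g$ on a subset $V\subseteq E$ is $C^{0,\sigma}$ if for each $x_0\in V$ and gauge $q$ on $F$ there are a gauge $p$ on $E$ and a neighbourhood $W$ of $x_0$ in $V$ with $q(g(y)-g(x))\le p(y-x)^\sigma$ for $x,y\in W$. $f$ is $C^{k,\sigma}_{SDS}$ if $C^k_{SDS}$ and all $f^{<\alpha>}$, $|\alpha|\le k$, are $C^{0,\sigma}$. *)

From HB Require Import structures.
From mathcomp Require Import all_boot all_order all_algebra.
From mathcomp Require Import all_classical all_reals.
From mathcomp Require Import topology function_spaces pseudometric_normed_Zmodule.

Set Implicit Arguments.
Unset Strict Implicit.
Unset Printing Implicit Defensive.
Import Order.TTheory GRing.Theory Num.Theory.
Local Open Scope classical_set_scope.
Local Open Scope ring_scope.

HB.mixin Record Field_isTopField (K : Type) of Topological K & GRing.Field K := {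
  tf_add_continuous : continuous (fun z : K * K => z.1 + z.2);
  tf_opp_continuous : continuous (fun z : K => - z);
  tf_mul_continuous : continuous (fun z : K * K => z.1 * z.2);
  tf_inv_continuous : forall x : K, x != 0 -> {for x, continuous (@GRing.inv K)};
  tf_hausdorff : hausdorff_space K;
  tf_nondiscrete : ~ (forall A : set K, open A)
}.

#[short(type="topFieldType")]
HB.structure Definition TopField :=
  {K of Field_isTopField K & Topological K & GRing.Field K}.

HB.mixin Record Lmodule_isTopVS (K : topFieldType) (V : Type)
    of Topological V & GRing.Lmodule K V := {
  tvs_add_continuous : continuous (fun z : V * V => z.1 + z.2);
  tvs_scale_continuous : continuous (fun z : K * V => z.1 *: z.2);
  tvs_hausdorff : hausdorff_space V
}.

#[short(type="topVSType")]
HB.structure Definition TopVS (K : topFieldType) :=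
  {V of Lmodule_isTopVS K V & Topological V & GRing.Lmodule K V}.

From mathcomp Require Import exp.

Definition is_absolute_value (K : topFieldType) (R : realType) (a : K -> R) :=
  [/\ forall x, 0 <= a x,
      forall x, a x = 0 <-> x = 0,
      forall x y, a (x * y) = a x * a y
    & forall x y, a (x + y) <= a x + a y].

Definition defines_topology (K : topFieldType) (R : realType) (a : K -> R) :=
  forall (x : K) (A : set K),
    nbhs x A <-> exists2 r : R, 0 < r & forall y, a (y - x) < r -> A y.

Definition valued_field (K : topFieldType) (R : realType) (a : K -> R) :=
  is_absolute_value a /\ defines_topology a.

Notation "K ^^ I" := {ptws I -> K} (at level 30) : type_scope.

(** Blocked coordinates: for a multi-index [al : I -> nat], the space
    K^{d+|al|} has coordinates x^(l)_j, l in I, 0 <= j <= al l. *)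
Definition blk (I : finType) (al : I -> nat) : finType :=
  {l : I & 'I_(al l).+1}.

Definition mindex_abs (I : finType) (al : I -> nat) : nat := \sum_(l : I) al l.

Definition choice_ix (I : finType) (al : I -> nat) : finType :=
  {dffun forall l : I, 'I_(al l).+1}.

Definition pick_pt (K : Type) (I : finType) (al : I -> nat)
   (x : blk al -> K) (s : choice_ix al) : I -> K :=
  fun l => x (Tagged (fun l => 'I_(al l).+1) (s l)).

Definition dom_ext (K : Type) (I : finType) (U : set (I -> K)) (al : I -> nat)
   : set (K ^^ blk al) :=
  [set x | forall s : choice_ix al, U (pick_pt x s)].

Arguments dom_ext {K I} U al _.

Definition dom_dq (K : Type) (I : finType) (U : set (I -> K)) (al : I -> nat)
   : set (K ^^ blk al) :=
  [set x | dom_ext U al x /\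
     forall (l : I) (j k : 'I_(al l).+1), j != k ->
       x (Tagged (fun l => 'I_(al l).+1) j) <> x (Tagged (fun l => 'I_(al l).+1) k)].

Arguments dom_dq {K I} U al _.

(** f^{>al<} (divided differences), given by the formula of the paper; for
    al = 0 the formula reduces to f itself (one summand, empty products). *)
Definition ddiff (K : topFieldType) (F : topVSType K) (I : finType)
   (f : (I -> K) -> F) (al : I -> nat) (x : K ^^ blk al) : F :=
  \sum_(s : choice_ix al)
     (\prod_(l : I) \prod_(k : 'I_(al l).+1 | k != s l)
        (x (Tagged (fun l => 'I_(al l).+1) (s l))
         - x (Tagged (fun l => 'I_(al l).+1) k))^-1) *: f (pick_pt x s).

(** h is a continuous extension of f^{>al<} to U^{<al>} (i.e. a candidate f^{<al>}) *)
Definition is_sds_ext (K : topFieldType) (F : topVSType K) (I : finType)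
   (U : set (I -> K)) (f : (I -> K) -> F) (al : I -> nat) (h : K ^^ blk al -> F) :=
  {within dom_ext U al, continuous h} /\
  forall x, dom_dq U al x -> h x = ddiff f x.

Arguments is_sds_ext {K F I} U f al h.

(** C^k_SDS (f : U -> F modelled by a total function; values off U are irrelevant) *)
Fixpoint CkSDS (K : topFieldType) (F : topVSType K) (I : finType)
   (U : set (I -> K)) (k : nat) (f : (I -> K) -> F) : Prop :=
  match k with
  | 0 => {within (U : set (K ^^ I)), continuous (f : K ^^ I -> F)}
  | k'.+1 => CkSDS U k' f /\
      forall al : I -> nat, mindex_abs al = k'.+1 ->
        exists h : K ^^ blk al -> F, is_sds_ext U f al h
  end.

Definition gauge_pt (K : topFieldType) (R : realType) (a : K -> R) (I : finType)
   (q : (I -> K) -> R) :=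
  [/\ forall x, 0 <= q x,
      forall (t : K) x, q (fun i => t * x i) = a t * q x
    & forall r : R, 0 < r -> nbhs ((fun _ => 0) : K ^^ I) [set y | q y < r]].

Definition gauge_vs (K : topFieldType) (R : realType) (a : K -> R)
   (F : topVSType K) (q : F -> R) :=
  [/\ forall x, 0 <= q x,
      forall (t : K) x, q (t *: x) = a t * q x
    & forall r : R, 0 < r -> nbhs (0 : F) [set y | q y < r]].

Definition C0sigma (K : topFieldType) (R : realType) (a : K -> R) (sigma : R)
   (F : topVSType K) (I : finType) (V : set (I -> K)) (g : (I -> K) -> F) :=
  forall x0, V x0 ->
  forall q : F -> R, gauge_vs a q ->
  exists p : (I -> K) -> R, gauge_pt a p /\
  exists W : set (K ^^ I), nbhs (x0 : K ^^ I) W /\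
    forall x y, V x -> W x -> V y -> W y ->
      q (g y - g x) <= powR (p (fun i => y i - x i)) sigma.

Definition CksigmaSDS (K : topFieldType) (R : realType) (a : K -> R) (sigma : R)
   (F : topVSType K) (I : finType) (U : set (I -> K)) (k : nat)
   (f : (I -> K) -> F) : Prop :=
  CkSDS U k f /\
  forall al : I -> nat, (mindex_abs al <= k)%N ->
    forall h : K ^^ blk al -> F, is_sds_ext U f al h -> C0sigma a sigma (dom_ext U al) h.

Definition unit_mi (d : nat) (i : 'I_d) : 'I_d -> nat := fun l => nat_of_bool (l == i).

Definition sds_domain (K : topFieldType) (d : nat) (U : set ('I_d -> K)) :=
  open (U : set (K ^^ 'I_d)) \/
  exists Us : 'I_d -> set K,
    (forall i, Us i `<=` closure (interior (Us i))) /\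
    U = [set x | forall i, Us i (x i)].

From HB Require Import structures.
From mathcomp Require Import all_boot all_order all_algebra.
From mathcomp Require Import all_classical all_reals all_analysis.
From mathcomp Require Import ring.
Import Order.TTheory GRing.Theory Num.Theory.
Local Open Scope classical_set_scope.
Local Open Scope ring_scope.
Set Implicit Arguments.
Unset Strict Implicit.
Unset Printing Implicit Defensive.

(* For [|al| >= 2] pick [i] with [al i > 0] and view [f^{>al<}] as a divided
   difference of [g := f^{>e_i<}], a function of [d + 1] variables whose [i]-th
   block holds two points [s, t]: freezing [s := x^(i)_0] and letting [t] run
   through [x^(i)_1, ..., x^(i)_(al i)] gives [f^{>al<}(x) = g^{>beta<}(restack x)],
   where [beta] lowers [al i] by one.  In one variable this is
   [f[x_0, ..., x_n] = (t |-> f[x_0, t])[x_1, ..., x_n]], which reduces to the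
   partial fraction expansion of [prod_(k >= 1) (x_0 - x_k)^-1].  As
   [|beta| = |al| - 1 <= k], the hypothesis on [f^{<e_i>}] provides [g^{<beta>}],
   and [g^{<beta>} \o restack] continuously extends [f^{>al<}].  For (b), points
   of a non-discrete field can be perturbed to be pairwise distinct, so [U^{>al<}]
   is dense in [U^{<al>}]; hence [f^{<al>}] is this composite, and precomposition
   with the coordinate map [restack] preserves [C^{0,sigma}]. *)

(* [x^(l)_n]; an out-of-range [n] yields [x^(l)_0]. *)
Definition blk_coord (K : Type) (I : finType) (al : I -> nat) (x : blk al -> K)
    (l : I) (n : nat) : K :=
  x (Tagged (fun l => 'I_(al l).+1) (@inord (al l) n)).

Lemma blk_coordE (K : Type) (I : finType) (al : I -> nat) (x : blk al -> K) l
    (j : 'I_(al l).+1) :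
  x (Tagged (fun l => 'I_(al l).+1) j) = blk_coord x l j.
Proof. by rewrite /blk_coord inord_val. Qed.

Lemma Tagged_ord_eq (I : finType) (T : I -> nat) (l : I) (j k : 'I_(T l).+1) :
  nat_of_ord j = nat_of_ord k ->
  Tagged (fun l => 'I_(T l).+1) j = Tagged (fun l => 'I_(T l).+1) k.
Proof. by move=> /ord_inj ->. Qed.

Definition dd_weight (K : fieldType) (X : nat -> K) (n j : nat) : K :=
  \prod_(0 <= k < n.+1 | k != j) (X j - X k)^-1.

Lemma eq_dd_weight (K : fieldType) (X Y : nat -> K) n n' j j' :
  n = n' -> j = j' -> (forall k, (k <= n)%N -> X k = Y k) -> (j <= n)%N ->
  dd_weight X n j = dd_weight Y n' j'.
Proof.
move=> <- <- XY jn; rewrite /dd_weight big_nat_cond [RHS]big_nat_cond.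
by apply: eq_bigr => k /andP[/andP[_ kn] _]; rewrite !XY.
Qed.

Lemma dd_weight_0_0 (K : fieldType) (X : nat -> K) n j :
  n = 0%N -> j = 0%N -> dd_weight X n j = 1.
Proof. by move=> -> ->; rewrite /dd_weight big_mkcond big_nat1. Qed.

Lemma dd_weight_1_0 (K : fieldType) (X : nat -> K) :
  dd_weight X 1 0 = (X 0%N - X 1%N)^-1.
Proof. by rewrite /dd_weight big_ltn_cond //= big_ltn_cond //= big_geq // mulr1. Qed.

Lemma dd_weight_1_1 (K : fieldType) (X : nat -> K) :
  dd_weight X 1 1 = (X 1%N - X 0%N)^-1.
Proof. by rewrite /dd_weight big_ltn_cond //= big_ltn_cond //= big_geq // mulr1. Qed.

Lemma ddiffE (K : topFieldType) (F : topVSType K) (I : finType)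
    (g : (I -> K) -> F) (al : I -> nat) (x : K ^^ blk al) :
  ddiff g x = \sum_(s : choice_ix al)
     (\prod_(l : I) dd_weight (blk_coord x l) (al l) (s l)) *:
       g (fun l => blk_coord x l (s l)).
Proof.
apply: eq_bigr => s _; congr (_ *: g _); last first.
  by apply: functional_extensionality_dep => l; rewrite /pick_pt blk_coordE.
apply: eq_bigr => l _; rewrite /dd_weight big_mkord.
by apply: eq_big => [//|k _]; rewrite !blk_coordE.
Qed.

Lemma partial_fractions (K : fieldType) (X : nat -> K) (a : nat) (s : seq nat)
    (y : K) :
  uniq [seq X t | t <- a :: s] -> (forall t, t \in a :: s -> y != X t) ->
  (\prod_(t <- a :: s) (y - X t))^-1 =
  \sum_(t <- a :: s) (\prod_(u <- a :: s | u != t) (X t - X u))^-1 * (y - X t)^-1.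
Proof.
elim: s a y => [|b s IH] a y.
  by move=> _ _; rewrite !big_seq1 big_cons big_nil eqxx /= invr1 mul1r.
move: IH => /(_ b); set s' := b :: s => IH; clearbody s'.
rewrite map_cons cons_uniq => /andP[aX uX] Hy.
have ya : y - X a != 0 by rewrite subr_eq0 Hy // mem_head.
have anot : a \notin s' by apply: contra aX => as_; apply/mapP; exists a.
have Xa_neq t : t \in s' -> X a != X t.
  by move=> ts; apply: contraNneq aX => ->; apply/mapP; exists t.
rewrite big_cons invfM big_cons /= [\prod_(u <- a :: s' | u != a) _]big_cons eqxx /=.
have -> : \prod_(u <- s' | u != a) (X a - X u) = \prod_(u <- s') (X a - X u).
  rewrite big_seq_cond [RHS]big_seq; apply: eq_bigl => u.
  by case: (boolP (u \in s')) => //= us; apply: contraNneq anot => <-.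
rewrite (IH (X a) uX); last by move=> t ts; rewrite Xa_neq.
rewrite (IH y uX); last by move=> t ts; apply: Hy; rewrite in_cons ts orbT.
rewrite mulr_sumr mulr_suml -big_split /= !big_seq; apply: eq_bigr => t ts.
have ta : a != t by apply: contraNneq anot => ->.
have h1 : X a - X t != 0 by rewrite subr_eq0 Xa_neq.
have h3 : y - X t != 0 by rewrite subr_eq0 Hy // in_cons ts orbT.
rewrite big_cons ta invfM.
set P := (\prod_(j <- s' | j != t) _)^-1.
rewrite -[X t - X a]opprB; field.
by rewrite h1 h3 ya oppr_eq0 h1.
Qed.

Lemma big_nat_neq0 (R : Type) (idx : R) (op : Monoid.law idx) (G : nat -> R) n :
  \big[op/idx]_(0 <= k < n.+1 | k != 0%N) G k = \big[op/idx]_(1 <= k < n.+1) G k.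
Proof.
rewrite big_ltn_cond //= big_nat_cond [RHS]big_nat_cond.
by apply: eq_bigl => -[|k] //=; rewrite !andbT.
Qed.

Lemma dd_weight_neq0 (K : fieldType) (X : nat -> K) m j : j != 0%N ->
  dd_weight X m j =
  (\prod_(1 <= k < m.+1 | k != j) (X j - X k)^-1) * (X j - X 0%N)^-1.
Proof. by move=> j0; rewrite /dd_weight big_ltn_cond // eq_sym j0 mulrC. Qed.

Lemma dd_weight0_partial_fractions (K : fieldType) (X : nat -> K) (m : nat) :
  (0 < m)%N ->
  (forall a b, (a <= m)%N -> (b <= m)%N -> a != b -> X a != X b) ->
  dd_weight X m 0 =
  \sum_(1 <= j < m.+1)
     (\prod_(1 <= k < m.+1 | k != j) (X j - X k)^-1) * (X 0%N - X j)^-1.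
Proof.
move=> m0 Xinj; rewrite /dd_weight big_nat_neq0.
have iotaE : index_iota 1 m.+1 = 1%N :: iota 2 m.-1.
  by rewrite /index_iota subSS subn0; case: (m) m0.
rewrite prodfV [RHS](eq_bigr (fun j => (\prod_(k <- index_iota 1 m.+1 | k != j)
   (X j - X k))^-1 * (X 0%N - X j)^-1)); last by move=> j _; rewrite prodfV.
rewrite iotaE partial_fractions -?iotaE //.
- rewrite map_inj_in_uniq ?iota_uniq // => a b.
  rewrite !mem_index_iota !ltnS => /andP[_ am] /andP[_ bm] Xab.
  by case: (eqVneq a b) => // /(Xinj a b am bm); rewrite Xab eqxx.
- move=> t; rewrite mem_index_iota => /andP[t1 tm].
  by apply: Xinj => //; rewrite eq_sym -lt0n.
Qed.

Lemma ptws_continuous (T K : topologicalType) (I : eqType) (g : T -> {ptws I -> K}) :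
  (forall i, continuous (fun t => g t i)) -> continuous g.
Proof.
move=> gc t; apply/cvg_sup => i; apply/cvg_image => [|B /= nB].
  by apply/seteqP; split => // y _; exists (fun _ => y).
exists ((fun f : I -> K => f i) @^-1` B); first exact: gc.
by apply/seteqP; split => [y [f /= ? <-]|y By] //; exists (fun _ => y).
Qed.

Lemma precomp_continuous (K : topologicalType) (I J : eqType) (tf : J -> I) :
  continuous (fun z : {ptws I -> K} => ((fun j => z (tf j)) : {ptws J -> K})).
Proof.
by apply: ptws_continuous => j; exact: (@proj_continuous I (fun _ => K) (tf j)).
Qed.

Lemma within_continuous_mapsto_comp (T1 T2 T3 : topologicalType) (A : set T1)
    (B : set T2) (p : T1 -> T2) (g : T2 -> T3) :
  continuous p -> (forall x, A x -> B (p x)) -> {within B, continuous g} ->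
  {within A, continuous (g \o p)}.
Proof.
move=> pc AB /subspace_continuousP gc; apply/subspace_continuousP => x Ax Q HQ.
have := pc x _ (gc _ (AB _ Ax) Q HQ); rewrite !nbhs_simpl /=.
by apply: filterS => y Hy Ay; apply/Hy/AB.
Qed.

Lemma C0sigma_precomp (K : topFieldType) (F : topVSType K) (R : realType)
    (a : K -> R) (sigma : R) (I J : finType) (V : set (I -> K)) (W : set (J -> K))
    (tf : J -> I) (H : (J -> K) -> F) :
  (forall x, V x -> W (fun j => x (tf j))) -> C0sigma a sigma W H ->
  C0sigma a sigma V (fun x => H (fun j => x (tf j))).
Proof.
move=> VW HC x0 Vx0 q gq.
have [p [[p0 pZ pnbhs] [W' [nW' HW']]]] := HC _ (VW _ Vx0) q gq.
exists (fun z => p (fun j => z (tf j))); split.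
  split=> // r r0; exact: (@precomp_continuous K I J tf (fun _ => 0) _ (pnbhs r r0)).
exists ((fun z : {ptws I -> K} => ((fun j => z (tf j)) : {ptws J -> K})) @^-1` W').
split; first exact: (@precomp_continuous K I J tf x0).
by move=> x y Vx Wx Vy Wy; exact: HW' (VW _ Vx) Wx (VW _ Vy) Wy.
Qed.

Lemma C0sigma_eq_in (K : topFieldType) (F : topVSType K) (R : realType)
    (a : K -> R) (sigma : R) (I : finType) (V : set (I -> K)) (g g' : (I -> K) -> F) :
  {in V, g =1 g'} -> C0sigma a sigma V g' -> C0sigma a sigma V g.
Proof.
move=> gg' Hg' x0 Vx0 q gq; have [p [gp [W [nW HW]]]] := Hg' x0 Vx0 q gq.
exists p; split => //; exists W; split => // x y Vx Wx Vy Wy.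
by rewrite !gg' ?inE //; apply: HW.
Qed.

(* Otherwise [a] would be isolated in [K], hence by translation every point
   would be, contradicting non-discreteness. *)
Lemma open_notin_seq (K : topFieldType) (A : set K) (a : K) (s : seq K) :
  open A -> A a -> exists2 w, A w & w \notin s.
Proof.
move=> oA Aa; apply: contrapT => noA.
have As w : A w -> w \in s.
  by move=> Aw; apply: contrapT => /negP ws; apply: noA; exists w.
have a_isolated : nbhs a [set a].
  have : closed ([set` s] `\ a).
    apply: (accessible_finite_set_closed.1 (hausdorff_accessible (@tf_hausdorff K))).
    exact/finite_setD/finite_seq.
  rewrite -openC => oC; have nC : nbhs a (~` ([set` s] `\ a)).
    by apply: open_nbhs_nbhs; split => // -[_]; apply.
  apply: filterS (filterI (open_nbhs_nbhs (conj oA Aa)) nC) => z [Az nz].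
  by apply: contrapT => za; apply: nz; split => //; apply: As.
apply: (@tf_nondiscrete K) => B; rewrite openE => p Bp.
have shift_cont (c : K) : continuous (fun z : K => z + c).
  move=> z; apply: (@continuous_comp _ _ _ (fun z : K => (z, c))
    (fun z : K * K => z.1 + z.2)); last exact: tf_add_continuous.
  by apply: cvg_pair => //; exact: cvg_cst.
have : nbhs (p + (a - p)) [set a] by rewrite addrC subrK.
move=> /(shift_cont (a - p) p); rewrite nbhs_simpl /=.
apply: filterS => z /= /(canRL (addrK (a - p))) ->.
by rewrite opprB addrC subrK.
Qed.

(* The coordinates are moved one at a time, each into [T b] and away from the
   finitely many values already used. *)
Lemma perturb_injective (K : topFieldType) (B : finType) (x : {ptws B -> K})
    (O : set {ptws B -> K}) (T : B -> set K) :
  open O -> O x -> (forall b, open (T b)) ->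
  (forall b W, nbhs (x b) W -> exists w, W w /\ T b w) ->
  exists y : {ptws B -> K}, [/\ O y, forall b, T b (y b) & injective y].
Proof.
move=> oO Ox oT Tx.
suff : forall s : seq B, uniq s -> exists y : {ptws B -> K},
   [/\ O y, forall b, b \in s -> T b (y b), forall b, b \notin s -> y b = x b &
       {in s &, injective y}].
  case/(_ (enum B) (enum_uniq B)) => y [Oy Ty _ Iy]; exists y; split => //.
    by move=> b; apply: Ty; rewrite mem_enum.
  by move=> b c; apply: Iy; rewrite mem_enum.
elim => [|b s IH /= /andP[bs us]]; first by exists x; split.
have [y [Oy Ty Xy Iy]] := IH us.
pose W := [set w | O (dfwith y b w)].
have oW : open W.
  apply: (@open_comp _ _ (fun w : K => (dfwith y b w : {ptws B -> K}))) => // w _.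
  exact: (@dfwith_continuous B (fun _ => K)).
have Wyb : W (y b).
  rewrite /W /=; suff -> : dfwith y b (y b) = y :> (B -> K) by [].
  by apply: functional_extensionality_dep => c; case: dfwithP.
have [w0 [Ww0 Tw0]] : exists w, W w /\ T b w.
  by apply: Tx; rewrite -(Xy b bs); apply: open_nbhs_nbhs.
have [w [Ww Tw] wn] := open_notin_seq (map y s) (openI oW (oT b)) (conj Ww0 Tw0).
exists (dfwith y b w); split.
- exact: Ww.
- move=> c; rewrite in_cons; case: (eqVneq c b) => [->|cb] /= Hc.
    by rewrite dfwithin.
  by rewrite dfwithout 1?eq_sym //; apply: Ty.
- move=> c; rewrite in_cons negb_or => /andP[cb cs].
  by rewrite dfwithout 1?eq_sym //; apply: Xy.
- move=> c c'; rewrite !in_cons.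
  case: (eqVneq c b) => [->|cb] /=; case: (eqVneq c' b) => [->|c'b] //= Hc Hc'.
  + rewrite dfwithin dfwithout 1?eq_sym // => E.
    by move: wn; rewrite E; move/negP; case; apply: map_f.
  + rewrite dfwithin dfwithout 1?eq_sym // => E.
    by move: wn; rewrite -E; move/negP; case; apply: map_f.
  + by rewrite !dfwithout 1?eq_sym //; apply: Iy.
Qed.

Lemma dom_dq_dense (K : topFieldType) (d : nat) (U : set ('I_d -> K))
    (al : 'I_d -> nat) :
  sds_domain U -> forall x, dom_ext U al x ->
  forall N, nbhs (x : K ^^ blk al) N -> exists y, dom_dq U al y /\ N y.
Proof.
have distinct (y : K ^^ blk al) : injective y ->
    forall (l : 'I_d) (j k : 'I_(al l).+1), j != k ->
      y (Tagged (fun l => 'I_(al l).+1) j) <> y (Tagged (fun l => 'I_(al l).+1) k).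
  move=> iy l j k jk /iy yjk; have jk' := eq_from_Tagged yjk.
  by move: jk; rewrite jk' eqxx.
move=> [oU|[Us [HUs ->]]] x Hx N nN.
  have nD : nbhs (x : K ^^ blk al) (dom_ext U al).
    apply: (filterS _ (@filter_forall _ (choice_ix al)
       (fun s (y : K ^^ blk al) => U (pick_pt y s)) (nbhs (x : K ^^ blk al)) _ _))
      => [y //|s].
    apply: (@precomp_continuous K (blk al) 'I_d
      (fun l => Tagged (fun l => 'I_(al l).+1) (s l)) x).
    by apply: open_nbhs_nbhs; split => //; exact: Hx.
  have [y [Oy _ iy]] := @perturb_injective K (blk al) x (interior (N `&` dom_ext U al))
    (fun _ => setT) (@open_interior _ _) (filterI nN nD) (fun _ => openT)
    (fun b W nW => ex_intro _ (x b) (conj (nbhs_singleton nW) I)).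
  have [Ny Dy] := nbhs_singleton Oy.
  by exists y; split => //; split => //; apply: distinct.
have xb (b : blk al) : Us (tag b) (x b).
  case: b => l j.
  pose s : choice_ix al :=
    finfun (fun l' => @inord (al l') (if l' == l then nat_of_ord j else 0%N)).
  by have := Hx s l; rewrite /pick_pt ffunE eqxx inord_val.
have HT b W : nbhs (x b) W -> exists w, W w /\ interior (Us (tag b)) w.
  by move=> nW; have [w [h1 h2]] := HUs _ _ (xb b) W nW; exists w.
have [y [Oy Ty iy]] := @perturb_injective K (blk al) x (interior N)
  (fun b => interior (Us (tag b))) (@open_interior _ _) nN
  (fun b => @open_interior _ _) HT.
exists y; split; last exact: nbhs_singleton Oy.
split; last exact: distinct.
by move=> s l; apply: interior_subset; apply: (Ty (Tagged (fun l => 'I_(al l).+1) (s l))).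
Qed.

Lemma sds_ext_unique (K : topFieldType) (F : topVSType K) (d : nat)
    (U : set ('I_d -> K)) (f : ('I_d -> K) -> F) (al : 'I_d -> nat)
    (g1 g2 : K ^^ blk al -> F) :
  sds_domain U -> is_sds_ext U f al g1 -> is_sds_ext U f al g2 ->
  {in dom_ext U al, g1 =1 g2}.
Proof.
move=> sU [c1 e1] [c2 e2] x; rewrite inE => Ax.
pose G := within (dom_dq U al) (nbhs (x : K ^^ blk al)).
have PG : ProperFilter G.
  apply: within_nbhs_proper => B nB.
  by have [y [Dy By]] := dom_dq_dense sU Ax nB; exists y.
have lim_at_x (g : K ^^ blk al -> F) : {within dom_ext U al, continuous g} ->
    g @ G --> g x.
  move=> /subspace_continuousP /(_ x Ax); apply: cvg_trans => P.
  by rewrite /= !nbhs_simpl /within /=; apply: filterS => y Hy [/Hy].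
have g1_lim2 : g1 @ G --> g2 x.
  apply: cvg_trans (lim_at_x g2 c2); apply: fmap_within_eq => y.
  by rewrite inE => Dy; rewrite e1 // e2.
exact: (@cvg_unique _ (@tvs_hausdorff K F) _ (fmap_proper_filter g1 PG) _ _
  (lim_at_x g1 c1) g1_lim2).
Qed.

Lemma dom_ext_blk_coord (K : Type) (I : finType) (U : set (I -> K)) (al : I -> nat)
    (x : blk al -> K) :
  dom_ext U al x -> forall v : I -> nat, (forall l, (v l <= al l)%N) ->
  U (fun l => blk_coord x l (v l)).
Proof.
move=> Ux v vl; have := Ux [ffun l => @inord (al l) (v l)].
by congr U; apply: functional_extensionality_dep => l; rewrite /pick_pt ffunE.
Qed.

Lemma dom_dq_neq (K : Type) (I : finType) (U : set (I -> K)) (al : I -> nat)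
    (x : blk al -> K) :
  dom_dq U al x -> forall p q : blk al, tag p = tag q -> p != q -> x p <> x q.
Proof.
case=> _ x_inj [l j] [l' k] /= ll'; subst l' => jk; apply: x_inj.
by apply: contraNneq jk => ->.
Qed.

Lemma dom_dq_blk_coord_inj (K : eqType) (I : finType) (U : set (I -> K))
    (al : I -> nat) (x : blk al -> K) :
  dom_dq U al x -> forall l a b, (a <= al l)%N -> (b <= al l)%N -> a != b ->
  blk_coord x l a != blk_coord x l b.
Proof.
move=> Dx l a b al_a al_b ab; apply/eqP; apply: (dom_dq_neq Dx) => //.
apply: contraNneq ab => eq_ab; have := congr1 (@nat_of_ord _) (eq_from_Tagged eq_ab).
by rewrite !inordK // => ->.
Qed.

Section Reduction.
Variables (d : nat) (al : 'I_d -> nat) (i : 'I_d).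

Local Notation E := (blk (unit_mi i)).
Local Notation TE := (fun l : 'I_d => 'I_(unit_mi i l).+1).
Local Notation TA := (fun l : 'I_d => 'I_(al l).+1).

(* The coordinates of [K ^^ E] are [blk0 l] (the [l]-th variable, which for
   [l = i] is the first of the two points of block [i]) and [blk1] (the second
   point of block [i]).  The multi-index [beta_mi] on [E] has weight [al l] at
   [blk0 l] for [l != i], [0] at [blk0 i] and [al i - 1] at [blk1], so that
   [|beta_mi| = |al| - 1]; [restack x] moves [x^(i)_0] to [blk0 i] and
   [x^(i)_1, ..., x^(i)_(al i)] to the block of [blk1]. *)
Definition blk0 (l : 'I_d) : E := Tagged TE (ord0 : 'I_(unit_mi i l).+1).
Definition blk1 : E := Tagged TE (@inord (unit_mi i i) 1).

Definition beta_mi (t : E) : nat :=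
  if tag t == i then (if nat_of_ord (tagged t) == 0%N then 0%N else (al i).-1)
  else al (tag t).

Definition blk_shift (t : E) : nat :=
  if (tag t == i) && (nat_of_ord (tagged t) != 0%N) then 1%N else 0%N.

Definition restack_index (p : blk beta_mi) : blk al :=
  Tagged TA (@inord (al (tag (tag p))) (blk_shift (tag p) + nat_of_ord (tagged p))).

Definition restack (K : Type) (x : blk al -> K) : blk beta_mi -> K :=
  fun p => x (restack_index p).

Lemma unit_mi_eq : unit_mi i i = 1%N.
Proof. by rewrite /unit_mi eqxx. Qed.

Lemma unit_mi_neq l : l != i -> unit_mi i l = 0%N.
Proof. by rewrite /unit_mi => /negbTE ->. Qed.

Lemma val_blk1 : nat_of_ord (tagged blk1) = 1%N.
Proof. by rewrite /= inordK // unit_mi_eq. Qed.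

Lemma beta_blk0 l : beta_mi (blk0 l) = if l == i then 0%N else al l.
Proof. by rewrite /beta_mi /=; case: eqP. Qed.

Lemma beta_blk1 : beta_mi blk1 = (al i).-1.
Proof. by rewrite /beta_mi val_blk1 /= eqxx. Qed.

Lemma shift_blk0 l : blk_shift (blk0 l) = 0%N.
Proof. by rewrite /blk_shift /= andbF. Qed.

Lemma shift_blk1 : blk_shift blk1 = 1%N.
Proof. by rewrite /blk_shift val_blk1 /= eqxx. Qed.

Lemma blk_unitP (t : E) : t = blk1 \/ t = blk0 (tag t).
Proof.
case: t => l j /=; case: (eqVneq l i) => [eli|nli]; last first.
  right; apply: Tagged_ord_eq; move: (ltn_ord j).
  by rewrite [in X in (_ < X)%N -> _]unit_mi_neq // ltnS leqn0 => /eqP.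
subst l; have := ltn_ord j; rewrite [in X in (_ < X)%N -> _]unit_mi_eq.
case: j => [[|[|n]] Hj] //= _; first by right; apply: Tagged_ord_eq.
by left; apply: Tagged_ord_eq; rewrite /= inordK // unit_mi_eq.
Qed.

Lemma blk0K : cancel blk0 tag. Proof. by []. Qed.

Lemma blk0_neq_blk1 l : blk0 l != blk1.
Proof.
apply/eqP => E01; have := congr1 tag E01; rewrite /= => eli; subst l.
by have := congr1 (fun t : E => nat_of_ord (tagged t)) E01; rewrite /= val_blk1.
Qed.

Lemma big_blk_unit (R : Type) (idx : R) (op : Monoid.com_law idx) (G : E -> R) :
  \big[op/idx]_(t : E) G t =
  op (G blk1) (op (G (blk0 i)) (\big[op/idx]_(l | l != i) G (blk0 l))).
Proof.
rewrite (bigD1 blk1) //= (bigD1 (blk0 i)) /=; last by rewrite blk0_neq_blk1.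
congr (op _ (op _ _)); rewrite (reindex_onto blk0 tag) /=; last first.
  move=> t /andP[t1 t0]; case: (blk_unitP t) => [Ht|-> //].
  by move: t1; rewrite Ht eqxx.
by apply: eq_bigl => l; rewrite eqxx andbT blk0_neq_blk1 (can_eq blk0K).
Qed.

Hypothesis al_i_gt0 : (0 < al i)%N.

Lemma blk_coord_restack (K : Type) (x : blk al -> K) t n :
  (n <= beta_mi t)%N -> blk_coord (restack x) t n = blk_coord x (tag t) (blk_shift t + n).
Proof. by move=> nb; rewrite /blk_coord /restack /restack_index /= inordK. Qed.

Lemma val_beta_blk0i (j : 'I_(beta_mi (blk0 i)).+1) : nat_of_ord j = 0%N.
Proof.
by have := ltn_ord j; rewrite [in X in (_ < X)%N -> _]beta_blk0 eqxx ltnS leqn0 => /eqP.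
Qed.

Lemma ltn_beta_blk1 (j : 'I_(beta_mi blk1).+1) : (nat_of_ord j < al i)%N.
Proof. by have := ltn_ord j; rewrite [in X in (_ < X)%N -> _]beta_blk1 prednK. Qed.

Lemma leq_beta_blk0 l (j : 'I_(beta_mi (blk0 l)).+1) : l != i -> (nat_of_ord j <= al l)%N.
Proof.
by move=> nli; have := ltn_ord j; rewrite [in X in (_ < X)%N -> _]beta_blk0 (negbTE nli).
Qed.

Lemma shift_bound (t : E) (j : 'I_(beta_mi t).+1) :
  (blk_shift t + j <= al (tag t))%N.
Proof.
case: (blk_unitP t) j => -> j; first by rewrite shift_blk1 add1n ltn_beta_blk1.
rewrite shift_blk0 add0n /=; move: (tag t) j => l j.
case: (eqVneq l i) => [eli|nli]; last exact: leq_beta_blk0.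
by subst l; rewrite val_beta_blk0i.
Qed.

Definition restack_ix (s' : choice_ix beta_mi) : choice_ix al :=
  finfun (fun l => @inord (al l)
    (if l == i then (nat_of_ord (s' blk1)).+1 else nat_of_ord (s' (blk0 l)))).

Definition unstack_ix (s : choice_ix al) : choice_ix beta_mi :=
  finfun (fun t => @inord (beta_mi t) (nat_of_ord (s (tag t)) - blk_shift t)).

Lemma restack_ix_eq (s' : choice_ix beta_mi) :
  nat_of_ord (restack_ix s' i) = (nat_of_ord (s' blk1)).+1.
Proof. by rewrite ffunE eqxx inordK // ltnS ltn_beta_blk1. Qed.

Lemma restack_ix_neq (s' : choice_ix beta_mi) l :
  l != i -> nat_of_ord (restack_ix s' l) = nat_of_ord (s' (blk0 l)).
Proof. by move=> nli; rewrite ffunE (negbTE nli) inordK // ltnS leq_beta_blk0. Qed.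

Lemma restack_ixK : cancel restack_ix unstack_ix.
Proof.
move=> s'; apply/ffunP => t; apply: ord_inj; rewrite ffunE.
case: (blk_unitP t) => [->|].
  rewrite /= inordK; first by rewrite restack_ix_eq shift_blk1 subn1.
  by rewrite restack_ix_eq shift_blk1 subn1 ltnS -ltnS prednK // ltn_beta_blk1.
move: (tag t) => l ->.
rewrite /= shift_blk0 subn0; case: (eqVneq l i) => [->|nli].
  by rewrite !val_beta_blk0i.
by rewrite restack_ix_neq // inordK // ltnS leq_beta_blk0.
Qed.

Lemma unstack_ixK (s : choice_ix al) :
  nat_of_ord (s i) != 0%N -> restack_ix (unstack_ix s) = s.
Proof.
move=> si0; apply/ffunP => l; apply: ord_inj; rewrite ffunE.
case: (eqVneq l i) => [->|nli].
  have unstack1 : nat_of_ord (unstack_ix s blk1) = (nat_of_ord (s i)).-1.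
    rewrite ffunE inordK /= shift_blk1 ?subn1 // beta_blk1.
    by rewrite (prednK al_i_gt0) -ltnS (prednK (n := nat_of_ord (s i))) ?lt0n.
  by rewrite unstack1 prednK ?lt0n // inordK.
have unstack0 : nat_of_ord (unstack_ix s (blk0 l)) = nat_of_ord (s l).
  by rewrite ffunE /= shift_blk0 subn0 inordK // beta_blk0 (negbTE nli).
by rewrite unstack0 inordK.
Qed.

Definition ix0 : choice_ix (unit_mi i) := finfun (fun l => ord0).
Definition ix1 : choice_ix (unit_mi i) := finfun (fun l => @inord (unit_mi i l) (l == i)).

Lemma unit_ixP (u : choice_ix (unit_mi i)) : u = ix0 \/ u = ix1.
Proof.
have ul0 l : l != i -> nat_of_ord (u l) = 0%N.
  move=> nli; have := ltn_ord (u l).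
  by rewrite [in X in (_ < X)%N -> _]unit_mi_neq // ltnS leqn0 => /eqP.
have := ltn_ord (u i); rewrite [in X in (_ < X)%N -> _]unit_mi_eq.
case ui: (nat_of_ord (u i)) => [|[|n]] // _; [left | right]; apply/ffunP => l;
  apply: ord_inj; rewrite ffunE /=; case: (eqVneq l i) => [->|nli];
  rewrite ?ui ?ul0 ?inordK ?unit_mi_eq //.
Qed.

Lemma sum_unit_ix (V : zmodType) (G : choice_ix (unit_mi i) -> V) :
  \sum_u G u = G ix0 + G ix1.
Proof.
have ix01 : ix0 != ix1.
  apply/eqP => /ffunP /(_ i); rewrite !ffunE => /(congr1 val) /=.
  by rewrite eqxx inordK // unit_mi_eq.
rewrite (bigD1 ix0) //= (bigD1 ix1) /=; last by rewrite eq_sym.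
rewrite big1 ?addr0 // => u /andP[n0 n1].
by case: (unit_ixP u) => Hu; [move: n0|move: n1]; rewrite Hu eqxx.
Qed.

Variables (K : topFieldType) (F : topVSType K).

Section RestackIdentity.
Variables (x : blk al -> K) (f : ('I_d -> K) -> F).

Local Notation X := (blk_coord x i).
Local Notation C j := (\prod_(1 <= k < (al i).+1 | k != j) (X j - X k)^-1).
Local Notation A s := (\prod_(l | l != i) dd_weight (blk_coord x l) (al l) (s l)).
Local Notation pt s := (fun l => blk_coord x l (s l)).
Local Notation pt0 s := (fun l => blk_coord x l (if l == i then 0%N else s l)).
Local Notation restack_pick s' := (fun t => blk_coord (restack x) t (s' t)).

Lemma weight_restack (s' : choice_ix beta_mi) :
  \prod_(t : E) dd_weight (blk_coord (restack x) t) (beta_mi t) (s' t) =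
  C (restack_ix s' i) * A (restack_ix s').
Proof.
rewrite (@big_blk_unit _ 1 *%R) /=.
rewrite (@dd_weight_0_0 _ _ (beta_mi (blk0 i))) ?beta_blk0 ?eqxx ?val_beta_blk0i // mul1r.
congr (_ * _).
  rewrite (@eq_dd_weight _ _ (fun k => X k.+1) _ (al i).-1 _ (s' blk1))
    ?beta_blk1 ?leq_ord // => [|k kb]; last first.
    by rewrite blk_coord_restack ?beta_blk1 // shift_blk1 add1n.
  rewrite /dd_weight restack_ix_eq big_add1 /= (prednK al_i_gt0).
  by apply: eq_bigl => k; rewrite eqSS.
apply: eq_bigr => l nli; apply: eq_dd_weight; rewrite ?leq_ord //.
- by rewrite beta_blk0 (negbTE nli).
- by rewrite restack_ix_neq.
- by move=> k kb; rewrite blk_coord_restack // shift_blk0 add0n.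
Qed.

Lemma ddiff_restack_pick (s' : choice_ix beta_mi) :
  ddiff f (restack_pick s') =
    (X 0%N - X (restack_ix s' i))^-1 *: f (pt0 (restack_ix s'))
  + (X (restack_ix s' i) - X 0%N)^-1 *: f (pt (restack_ix s')).
Proof.
set s := restack_ix s'; set y := restack_pick s'.
have y0 l : blk_coord y l 0 = blk_coord x l (if l == i then 0%N else s l).
  rewrite /blk_coord.
  have -> : Tagged TE (@inord (unit_mi i l) 0) = blk0 l.
    by apply: Tagged_ord_eq; rewrite inordK.
  rewrite /y blk_coord_restack ?leq_ord //= shift_blk0 add0n.
  case: (eqVneq l i) => [eli|nli]; first by subst l; rewrite val_beta_blk0i.
  by rewrite restack_ix_neq.
have y1 : blk_coord y i 1 = X (s i).
  rewrite /blk_coord -/blk1 /y blk_coord_restack ?leq_ord //.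
  by rewrite shift_blk1 add1n restack_ix_eq.
have weight_ix0 :
    \prod_l dd_weight (blk_coord y l) (unit_mi i l) (ix0 l) = (X 0%N - X (s i))^-1.
  rewrite (bigD1 i) //= big1 ?mulr1 => [|l nli]; last first.
    by apply: dd_weight_0_0; [exact: unit_mi_neq | rewrite ffunE].
  have ix0_i : nat_of_ord (ix0 i) = 0%N by rewrite ffunE.
  rewrite (eq_dd_weight unit_mi_eq ix0_i (fun _ _ => erefl) (leq_ord _)).
  by rewrite dd_weight_1_0 y1 y0 eqxx.
have weight_ix1 :
    \prod_l dd_weight (blk_coord y l) (unit_mi i l) (ix1 l) = (X (s i) - X 0%N)^-1.
  rewrite (bigD1 i) //= big1 ?mulr1 => [|l nli]; last first.
    by apply: dd_weight_0_0; [exact: unit_mi_neq | rewrite ffunE (negbTE nli) inordK].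
  have ix1_i : nat_of_ord (ix1 i) = 1%N by rewrite ffunE eqxx inordK // unit_mi_eq.
  rewrite (eq_dd_weight unit_mi_eq ix1_i (fun _ _ => erefl) (leq_ord _)).
  by rewrite dd_weight_1_1 y1 y0 eqxx.
rewrite ddiffE sum_unit_ix weight_ix0 weight_ix1.
congr (_ *: f _ + _ *: f _); apply: functional_extensionality_dep => l.
  by rewrite ffunE y0.
rewrite ffunE; case: (eqVneq l i) => [->|nli]; first by rewrite inordK ?unit_mi_eq // y1.
by rewrite inordK // y0 (negbTE nli).
Qed.

Lemma ddiff_restack_sum (h : (E -> K) -> F) :
  (forall s' : choice_ix beta_mi, h (restack_pick s') = ddiff f (restack_pick s')) ->
  ddiff h (restack x) = \sum_(s : choice_ix al | nat_of_ord (s i) != 0%N)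
    (C (s i) * A s) *:
      ((X 0%N - X (s i))^-1 *: f (pt0 s) + (X (s i) - X 0%N)^-1 *: f (pt s)).
Proof.
move=> hf; rewrite [RHS](reindex_onto restack_ix unstack_ix) => [|s si0]; last first.
  exact: unstack_ixK.
rewrite ddiffE [RHS](eq_bigl xpredT) => [|s']; last first.
  by rewrite restack_ixK eqxx andbT restack_ix_eq.
by apply: eq_bigr => s' _; rewrite hf ddiff_restack_pick weight_restack.
Qed.

Lemma weight_top (s : choice_ix al) : nat_of_ord (s i) != 0%N ->
  \prod_l dd_weight (blk_coord x l) (al l) (s l) = C (s i) * A s * (X (s i) - X 0%N)^-1.
Proof. by move=> si0; rewrite (bigD1 i) //= dd_weight_neq0 // mulrAC. Qed.

Hypothesis X_inj : forall a b, (a <= al i)%N -> (b <= al i)%N -> a != b -> X a != X b.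

(* The weight of [x^(i)_0] is split by partial fractions. *)
Lemma bottom_terms :
  \sum_(s : choice_ix al | nat_of_ord (s i) == 0%N)
     (\prod_l dd_weight (blk_coord x l) (al l) (s l)) *: f (pt s) =
  \sum_(s : choice_ix al | nat_of_ord (s i) != 0%N)
     (C (s i) * A s * (X 0%N - X (s i))^-1) *: f (pt0 s).
Proof.
pose z (s : choice_ix al) : choice_ix al :=
  finfun (fun l => if l == i then (ord0 : 'I_(al l).+1) else s l).
rewrite [RHS](partition_big z (fun r => nat_of_ord (r i) == 0%N)) /=; last first.
  by move=> s _; rewrite ffunE eqxx.
apply: eq_bigr => r /eqP r0.
rewrite (eq_bigr (fun s : choice_ix al =>
  (C (s i) * (X 0%N - X (s i))^-1 * A r) *: f (pt r))); last first.
  move=> s /andP[si0 /eqP zs].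
  have -> : A s = A r by rewrite -zs; apply: eq_bigr => l nli; rewrite ffunE (negbTE nli).
  suff -> : pt0 s = pt r by rewrite mulrAC.
  by apply: functional_extensionality_dep => l; rewrite -zs ffunE; case: eqP.
rewrite -scaler_suml -mulr_suml (bigD1 i) //=; congr ((_ * _) *: _).
pose hj (j : 'I_(al i).+1) : choice_ix al :=
  finfun (fun l => if l == i then @inord (al l) j else r l).
have hj_i j : hj j i = j by rewrite ffunE eqxx inord_val.
have z_hj j : z (hj j) = r.
  apply/ffunP => l; rewrite !ffunE; case: (eqVneq l i) => [->|nli] //.
  by apply: ord_inj; rewrite r0.
rewrite (reindex_onto hj (fun s => s i)) /=; last first.
  move=> s /andP[si0 /eqP zs]; apply/ffunP => l; rewrite ffunE.
  case: (eqVneq l i) => [->|nli]; first by rewrite inord_val.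
  by rewrite -zs ffunE (negbTE nli).
rewrite (eq_bigl (fun j : 'I_(al i).+1 => nat_of_ord j != 0%N)) => [|j]; last first.
  by rewrite hj_i z_hj !eqxx !andbT.
under eq_bigr do rewrite hj_i.
rewrite -(big_mkord (fun j => j != 0%N) (fun j => C j * (X 0%N - X j)^-1)).
by rewrite big_nat_neq0 r0 dd_weight0_partial_fractions.
Qed.

Lemma ddiff_restack (h : (E -> K) -> F) :
  (forall s' : choice_ix beta_mi, h (restack_pick s') = ddiff f (restack_pick s')) ->
  ddiff f x = ddiff h (restack x).
Proof.
move=> hf; rewrite ddiff_restack_sum // ddiffE.
rewrite (bigID (fun s : choice_ix al => nat_of_ord (s i) == 0%N)) /=.
rewrite bottom_terms -big_split /=; apply: eq_bigr => s si0.
by rewrite weight_top // scalerDr !scalerA.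
Qed.

End RestackIdentity.

Lemma restack_index_inj : injective restack_index.
Proof.
move=> [t j] [t' j'] eq_idx.
have eq_tag : tag t = tag t' := congr1 tag eq_idx.
have eq_pos : (blk_shift t + j = blk_shift t' + j')%N.
  move: (congr1 (fun p : blk al => nat_of_ord (tagged p)) eq_idx) => /=.
  by rewrite !inordK ?ltnS ?shift_bound.
suff tt' : t = t' by subst t'; apply: Tagged_ord_eq; move: eq_pos => /addnI.
move: eq_tag eq_pos; clear eq_idx.
case: (blk_unitP t) j => -> j; case: (blk_unitP t') j' => -> j' //.
- move: (tag t') j' => l j' /= eli; subst l.
  by rewrite shift_blk1 shift_blk0 val_beta_blk0i.
- move: (tag t) j => l j /= eli; subst l.
  by rewrite shift_blk1 shift_blk0 val_beta_blk0i.
- by move: (tag t) (tag t') j j' => l l' j j' /= ll' _; rewrite ll'.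
Qed.

Lemma restack_neq (U : set ('I_d -> K)) (x : blk al -> K) (p q : blk beta_mi) :
  dom_dq U al x -> tag (tag p) = tag (tag q) -> p != q -> restack x p <> restack x q.
Proof.
move=> Dx pq; rewrite -(inj_eq restack_index_inj).
exact: (dom_dq_neq Dx (p := restack_index p) (q := restack_index q) pq).
Qed.

Lemma dom_ext_restack (U : set ('I_d -> K)) (x : blk al -> K) :
  dom_ext U al x -> dom_ext (dom_ext U (unit_mi i)) beta_mi (restack x).
Proof.
move=> Ux s' u; change (U (fun l =>
  blk_coord x l (blk_shift (Tagged TE (u l)) + s' (Tagged TE (u l))))).
by apply: (dom_ext_blk_coord Ux) => l; exact: shift_bound (s' (Tagged TE (u l))).
Qed.

Lemma dom_dq_restack (U : set ('I_d -> K)) (x : blk al -> K) :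
  dom_dq U al x -> dom_dq (dom_ext U (unit_mi i)) beta_mi (restack x).
Proof.
move=> Dx; split=> [|t j k jk]; first by apply: dom_ext_restack; case: Dx.
apply: (restack_neq Dx) => //; apply: contraNneq jk => eq_jk.
by apply/eqP; exact: eq_from_Tagged eq_jk.
Qed.

Lemma dom_dq_restack_pick (U : set ('I_d -> K)) (x : blk al -> K)
    (s' : choice_ix beta_mi) :
  dom_dq U al x -> dom_dq U (unit_mi i) (pick_pt (restack x) s').
Proof.
move=> Dx; split=> [u|l j k jk]; first exact: dom_ext_restack Dx.1 s' u.
apply: (restack_neq Dx) => //; apply: contraNneq jk => /(congr1 tag) /= eq_jk.
by apply/eqP; exact: eq_from_Tagged eq_jk.
Qed.

Lemma sds_ext_restack (U : set ('I_d -> K)) (f : ('I_d -> K) -> F)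
    (h : (E -> K) -> F) (H : K ^^ blk beta_mi -> F) :
  is_sds_ext U f (unit_mi i) h -> is_sds_ext (dom_ext U (unit_mi i)) h beta_mi H ->
  is_sds_ext U f al (fun x => H (restack x)).
Proof.
move=> [hc hf] [Hc Hh]; split.
  apply: (@within_continuous_mapsto_comp _ _ _ _ _
    (fun x : K ^^ blk al => restack x : K ^^ blk beta_mi)).
  - exact: (@precomp_continuous K (blk al) (blk beta_mi) restack_index).
  - by move=> x; apply: dom_ext_restack.
  - exact: Hc.
move=> x Dx; rewrite (Hh _ (dom_dq_restack Dx)); apply/esym/ddiff_restack.
  exact: dom_dq_blk_coord_inj Dx i.
move=> s'; rewrite [fun t => _](_ : _ = pick_pt (restack x) s').
  exact/hf/dom_dq_restack_pick.
by apply: functional_extensionality_dep => t; rewrite /pick_pt blk_coordE.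
Qed.

Lemma mindex_abs_beta : mindex_abs beta_mi = (mindex_abs al).-1.
Proof.
rewrite /mindex_abs (@big_blk_unit _ 0%N addn) /= beta_blk1 beta_blk0 eqxx add0n.
rewrite [in RHS](bigD1 i) //= (eq_bigr al) => [|l nli]; last first.
  by rewrite beta_blk0 (negbTE nli).
by rewrite -!subn1 addnBAC.
Qed.

End Reduction.

Arguments beta_mi {d} al i t.
Arguments restack {d al} i {K} x p.

Lemma CkSDSP (K : topFieldType) (F : topVSType K) (I : finType) (U : set (I -> K))
    (k : nat) (f : (I -> K) -> F) :
  CkSDS U k f <-> CkSDS U 0 f /\
    forall al : I -> nat, (0 < mindex_abs al <= k)%N -> exists h, is_sds_ext U f al h.
Proof.
elim: k => [|k [IH1 IH2]] /=.
  split=> [C0|[] //]; split=> // al.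
  by case/andP=> al_gt0; rewrite leqNgt al_gt0.
split=> [[/IH1 [C0 ext_k] ext_k1]|[C0 ext]].
  split=> // al /andP[al0]; rewrite leq_eqVlt => /orP[/eqP|]; first exact: ext_k1.
  by rewrite ltnS => alk; apply: ext_k; rewrite al0 alk.
split=> [|al alk]; last by apply: ext; rewrite alk ltn0Sn leqnn.
apply: IH2; split=> // al /andP[al0 alk]; apply: ext.
by rewrite al0 (leq_trans alk).
Qed.

Lemma mindex_abs_unit (d : nat) (i : 'I_d) : mindex_abs (unit_mi i) = 1%N.
Proof.
rewrite /mindex_abs (bigD1 i) //= {1}/unit_mi eqxx big1 // => l nli.
by rewrite /unit_mi (negbTE nli).
Qed.

Lemma mindex_abs_gt0 (I : finType) (al : I -> nat) :
  (0 < mindex_abs al)%N -> exists i, (0 < al i)%N.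
Proof.
move=> al_gt0; apply: contrapT => no_pos; move: al_gt0.
rewrite /mindex_abs big1 // => l _; apply/eqP; rewrite -leqn0 leqNgt.
by apply/negP => al_l; apply: no_pos; exists l.
Qed.

Section Succ.
Variables (K : topFieldType) (F : topVSType K) (d : nat) (U : set ('I_d -> K))
  (f : ('I_d -> K) -> F) (k : nat).

Hypothesis C1f : CkSDS U 1 f.
Hypothesis Ck_unit :
  forall i h, is_sds_ext U f (unit_mi i) h -> CkSDS (dom_ext U (unit_mi i)) k h.

Lemma sds_ext_split (al : 'I_d -> nat) : (1 < mindex_abs al <= k.+1)%N ->
  exists i h H, [/\ (0 < al i)%N, is_sds_ext U f (unit_mi i) h
                  & is_sds_ext (dom_ext U (unit_mi i)) h (beta_mi al i) H].
Proof.
case/andP=> al_gt1 al_le; have [i al_i] := mindex_abs_gt0 (ltnW al_gt1).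
have [h hext] : exists h, is_sds_ext U f (unit_mi i) h.
  by apply: ((CkSDSP U 1 f).1 C1f).2; rewrite mindex_abs_unit.
have [H Hext] : exists H, is_sds_ext (dom_ext U (unit_mi i)) h (beta_mi al i) H.
  apply: ((CkSDSP _ k h).1 (Ck_unit hext)).2.
  by rewrite mindex_abs_beta // -subn1 subn_gt0 al_gt1 leq_subLR add1n.
by exists i, h, H.
Qed.

Lemma CkSDS_succ : CkSDS U k.+1 f.
Proof.
have [C0f ext1] := (CkSDSP U 1 f).1 C1f.
apply/CkSDSP; split=> // al /andP[al_gt0 al_le].
case: (leqP (mindex_abs al) 1) => [al_le1|al_gt1].
  by apply: ext1; rewrite al_gt0 al_le1.
have [|i [h [H [al_i hext Hext]]]] := sds_ext_split (al := al).
  by rewrite al_gt1 al_le.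
by exists (fun x => H (restack i x)); apply: (sds_ext_restack al_i hext Hext).
Qed.

End Succ.

Lemma CksigmaSDS_succ (K : topFieldType) (F : topVSType K) (d : nat)
    (U : set ('I_d -> K)) (f : ('I_d -> K) -> F) (k : nat) (R : realType)
    (a : K -> R) (sigma : R) :
  sds_domain U -> CksigmaSDS a sigma U 1 f ->
  (forall i h, is_sds_ext U f (unit_mi i) h ->
     CksigmaSDS a sigma (dom_ext U (unit_mi i)) k h) ->
  CksigmaSDS a sigma U k.+1 f.
Proof.
move=> sU [C1f C0sigma_le1] Csigma_unit.
have Ck_unit i h (hext : is_sds_ext U f (unit_mi i) h) := (Csigma_unit i h hext).1.
split=> [|al al_le g gext]; first exact: CkSDS_succ C1f Ck_unit.
case: (leqP (mindex_abs al) 1) => [al_le1|al_gt1]; first exact: C0sigma_le1 al_le1 g gext.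
have [|i [h [H [al_i hext Hext]]]] := sds_ext_split C1f Ck_unit (al := al).
  by rewrite al_gt1 al_le.
apply: (C0sigma_eq_in (sds_ext_unique sU gext (sds_ext_restack al_i hext Hext))).
apply: (C0sigma_precomp (W := dom_ext (dom_ext U (unit_mi i)) (beta_mi al i))).
  by move=> x; apply: dom_ext_restack.
apply: (Csigma_unit i h hext).2 _ _ H Hext.
by rewrite mindex_abs_beta // -subn1 leq_subLR add1n.
Qed.

Theorem lemma2p2 (K : topFieldType) (d : nat) (F : topVSType K)
    (U : set ('I_d -> K)) (f : ('I_d -> K) -> F) (k : nat) :
  (0 < d)%N -> sds_domain U ->
  (* (a) *)
  (CkSDS U 1 f ->
   (forall (i : 'I_d) (h : K ^^ blk (unit_mi i) -> F),
       is_sds_ext U f (unit_mi i) h -> CkSDS (dom_ext U (unit_mi i)) k h) ->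
   CkSDS U k.+1 f)
  /\
  (* (b) *)
  (forall (R : realType) (a : K -> R) (sigma : R),
     valued_field a -> 0 < sigma ->
     CksigmaSDS a sigma U 1 f ->
     (forall (i : 'I_d) (h : K ^^ blk (unit_mi i) -> F),
        is_sds_ext U f (unit_mi i) h ->
        CksigmaSDS a sigma (dom_ext U (unit_mi i)) k h) ->
     CksigmaSDS a sigma U k.+1 f).
Proof.
move=> _ sU; split; first exact: CkSDS_succ.
by move=> R a sigma _ _; exact: CksigmaSDS_succ.
Qed.
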